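(* The $\lambda j$-calculus enjoys PSN: every $\lambda$-term that is $\beta$-strongly normalizing is $\lambda j$-strongly normalizing.
   Context: $\lambda j$-terms are generated by $t,u::= x\mid \lambda x.t\mid t\,u\mid t[x/u]$ ($x$ ranging over variables); $\lambda x.t$ and $t[x/u]$ bind $x$ in $t$ (not in $u$), and terms are considered modulo $\alpha$-conversion. $\lambda$-terms are $\lambda j$-terms without jumps $[x/u]$. $\mathrm{fv}(t)$ is the set of free variables, $t\{x/u\}$ is capture-avoiding meta-level substitution, and $|t|_x$ is the number of free occurrences of $x$ in $t$. If $|t|_x=n\ge2$, $t_{[y]_x}$ denotes any term obtained from $t$ by replacing $k$ of the free occurrences of $x$ by a fresh variable $y$, for some $1\le k\le n-1$. ${\tt L}$ denotes a (possibly empty) list of jumps $[x_1/u_1]\dots[x_k/u_k]$. The rewriting rules, closed under all contexts, are: $({\tt dB})$ $(\lambda x.t){\tt L}\,u\to t[x/u]{\tt L}$ where no $x_i$ of ${\tt L}$ is free in $u$; $({\tt w})$ $t[x/u]\to t$ if $|t|_x=0$; $({\tt d})$ $t[x/u]\to t\{x/u\}$ if $|t|_x=1$; $({\tt c})$ $t[x/u]\to t_{[y]_x}[x/u][y/u]$ if $|t|_x\ge2$, $y$ fresh. $\to_{\lambda j}$ is the union of all four. $\beta$-reduction on $\lambda$-terms is the contextual closure of $(\lambda x.t)u\to_\beta t\{x/u\}$. A term is strongly normalizing for a relation if it has no infinite reduction sequence. *)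

From Stdlib Require Import Arith List.
Import ListNotations.

(* t ::= x | \x.t | t u | t[x/u].
   [Lam t] binds index 0 in t; [Sub t u] is t[x/u] and binds index 0 in t
   (not in u). *)
Inductive term : Type :=
| Var : nat -> term
| Lam : term -> term
| App : term -> term -> term
| Sub : term -> term -> term.

Fixpoint is_lambda (t : term) : Prop :=
  match t with
  | Var _ => True
  | Lam t => is_lambda t
  | App t u => is_lambda t /\ is_lambda u
  | Sub _ _ => False
  end.

Fixpoint shift (d c : nat) (t : term) : term :=
  match t with
  | Var n => if n <? c then Var n else Var (n + d)
  | Lam t => Lam (shift d (S c) t)
  | App t u => App (shift d c t) (shift d c u)
  | Sub t u => Sub (shift d (S c) t) (shift d c u)
  end.

(* subst c t u : capture-avoiding meta-level substitution of u (living in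
   the context outside the c local binders and the removed binder) for the
   index c in t; indices above c are decremented.  subst 0 t u = t{x/u}. *)
Fixpoint subst (c : nat) (t : term) (u : term) : term :=
  match t with
  | Var n => if n <? c then Var n
             else if n =? c then shift c 0 u
             else Var (pred n)
  | Lam t => Lam (subst (S c) t u)
  | App t1 t2 => App (subst c t1 u) (subst c t2 u)
  | Sub t1 t2 => Sub (subst (S c) t1 u) (subst c t2 u)
  end.

Fixpoint occ (c : nat) (t : term) : nat :=
  match t with
  | Var n => if n =? c then 1 else 0
  | Lam t => occ (S c) t
  | App t u => occ c t + occ c u
  | Sub t u => occ (S c) t + occ c u
  end.

(* t L where L = [u1; ...; uk] stands for t[x1/u1]...[xk/uk] *)
Definition apply_L (t : term) (L : list term) : term :=
  fold_left (fun acc u => Sub acc u) L t.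

(* dup c t s : s is t in which a fresh variable y (index c+1) has been
   inserted right after x (index c) and some (possibly none/all) free
   occurrences of x have been renamed to y.  Together with the side
   conditions |s|_x >= 1 and |s|_y >= 1 this is t_[y]_x. *)
Inductive dup : nat -> term -> term -> Prop :=
| dup_var_lt c n : n < c -> dup c (Var n) (Var n)
| dup_var_x c : dup c (Var c) (Var c)
| dup_var_y c : dup c (Var c) (Var (S c))
| dup_var_gt c n : c < n -> dup c (Var n) (Var (S n))
| dup_lam c t s : dup (S c) t s -> dup c (Lam t) (Lam s)
| dup_app c t1 t2 s1 s2 :
    dup c t1 s1 -> dup c t2 s2 -> dup c (App t1 t2) (App s1 s2)
| dup_sub c t1 t2 s1 s2 :
    dup (S c) t1 s1 -> dup c t2 s2 -> dup c (Sub t1 t2) (Sub s1 s2).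

Inductive lj_step : term -> term -> Prop :=
| lj_dB t L u :
    (* (\x.t)L u -> t[x/u]L ; the side condition on L is automatic with
       de Bruijn indices: u is lifted over the |L| binders of L *)
    lj_step (App (apply_L (Lam t) L) u)
            (apply_L (Sub t (shift (length L) 0 u)) L)
| lj_w t u : occ 0 t = 0 -> lj_step (Sub t u) (subst 0 t u)
| lj_d t u : occ 0 t = 1 -> lj_step (Sub t u) (subst 0 t u)
| lj_c t s u :
    2 <= occ 0 t -> dup 0 t s -> 1 <= occ 0 s -> 1 <= occ 1 s ->
    (* t_[y]_x [x/u][y/u] *)
    lj_step (Sub t u) (Sub (Sub s (shift 1 0 u)) u)
| lj_lam t t' : lj_step t t' -> lj_step (Lam t) (Lam t')
| lj_appl t t' u : lj_step t t' -> lj_step (App t u) (App t' u)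
| lj_appr t u u' : lj_step u u' -> lj_step (App t u) (App t u')
| lj_subl t t' u : lj_step t t' -> lj_step (Sub t u) (Sub t' u)
| lj_subr t u u' : lj_step u u' -> lj_step (Sub t u) (Sub t u').

Inductive beta_step : term -> term -> Prop :=
| beta_rule t u : beta_step (App (Lam t) u) (subst 0 t u)
| beta_lam t t' : beta_step t t' -> beta_step (Lam t) (Lam t')
| beta_appl t t' u : beta_step t t' -> beta_step (App t u) (App t' u)
| beta_appr t u u' : beta_step u u' -> beta_step (App t u) (App t u').

Definition SN (R : term -> term -> Prop) (t : term) : Prop :=
  ~ exists f : nat -> term, f 0 = t /\ forall n, R (f n) (f (S n)).

(* The heart of the proof is the IE property ([SNj_jumps_gen]): if the
   arguments w1 ... wk are SN and the unfolding t{x1/w1}...{xk/wk} vs is SN,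
   then so is t[x1/w1]...[xk/wk] vs.  Each step of the jump form is mirrored
   by at least one step of the unfolding, except (a) the root rules w, d, c,
   which leave the unfolding unchanged but decrease a measure weighing each
   jump by the number of occurrences of its variable, and (b) steps inside
   the arguments, which may be erased by the unfolding but terminate since
   the arguments are SN.  IE yields that a redex (\x.s) u vs is SN whenever
   u and s{x/u} vs are ([SNj_redex]).  Finally, induction on the beta-SN of
   a lambda-term and on the size of its subterms, inspecting the applicative
   spine of each subterm, shows that every subterm is lambda-j-SN
   ([SNj_of_beta_SN]); the theorem is the case of the term itself. *)

From Stdlib Require Import Arith List Lia Classical ClassicalEpsilon.
Import ListNotations.

Tactic Notation "csimpl" := cbn -[Nat.eqb Nat.ltb].
Tactic Notation "csimpl" "in" hyp(H) := cbn -[Nat.eqb Nat.ltb] in H.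
Ltac nat_cases :=
  repeat (match goal with
  | |- context [?a <? ?b] => destruct (Nat.ltb_spec a b)
  | |- context [?a =? ?b] => destruct (Nat.eqb_spec a b)
  end; csimpl); try reflexivity; try lia.

(** * De Bruijn algebra: shifting, substitution, occurrences *)

Lemma shift_zero t c : shift 0 c t = t.
Proof. revert c; induction t; intros; simpl; f_equal; auto. nat_cases; f_equal; lia. Qed.

Lemma shift_shift_comm u d k c e : e <= c ->
  shift d (c + k) (shift k e u) = shift k e (shift d c u).
Proof.
  revert d k c e; induction u; intros d k c e He; simpl.
  - nat_cases; f_equal; lia.
  - f_equal. apply (IHu d k (S c) (S e)); lia.
  - f_equal; auto.
  - f_equal; [apply (IHu1 d k (S c) (S e)); lia | auto].
Qed.

Lemma shift_shift_merge t a b c e : e <= c -> c <= e + b ->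
  shift a c (shift b e t) = shift (a + b) e t.
Proof.
  revert a b c e; induction t; intros; simpl.
  - nat_cases; f_equal; lia.
  - f_equal. apply IHt; lia.
  - f_equal; auto.
  - f_equal; [apply IHt1; lia | auto].
Qed.

Lemma subst_shift_cancel t c d e u : e <= c -> c <= d + e ->
  subst c (shift (S d) e t) u = shift d e t.
Proof.
  revert c d e; induction t; intros; simpl.
  - nat_cases; f_equal; lia.
  - f_equal. apply IHt; lia.
  - f_equal; auto.
  - f_equal; [apply IHt1; lia | auto].
Qed.

Lemma subst_shift_comm t c k e u : e <= c ->
  subst (c + k) (shift k e t) u = shift k e (subst c t u).
Proof.
  revert c k e; induction t; intros c k e He; simpl.
  - nat_cases; try (f_equal; lia).
    subst. rewrite shift_shift_merge by lia. f_equal. lia.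
  - f_equal. apply (IHt (S c) k (S e)); lia.
  - f_equal; auto.
  - f_equal; [apply (IHt1 (S c) k (S e)); lia | auto].
Qed.

Lemma shift_subst_comm t d k m u : k <= m ->
  shift d m (subst k t u) = subst k (shift d (S m) t) (shift d (m - k) u).
Proof.
  revert k m; induction t; intros k m Hk; simpl.
  - nat_cases; try (f_equal; lia).
    subst. rewrite <- (shift_shift_comm u d k (m - k) 0) by lia. f_equal. lia.
  - rewrite IHt by lia. reflexivity.
  - f_equal; auto.
  - rewrite IHt1, IHt2 by lia. reflexivity.
Qed.

Lemma subst_subst t k m u0 u : k <= m ->
  subst m (subst k t u0) u = subst k (subst (S m) t u) (subst (m - k) u0 u).
Proof.
  revert k m; induction t; intros k m Hk; simpl.
  - nat_cases; try (f_equal; lia).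
    + subst. rewrite <- (subst_shift_comm u0 (m - k) k 0) by lia. f_equal. lia.
    + rewrite subst_shift_cancel by lia. reflexivity.
  - rewrite IHt by lia. reflexivity.
  - f_equal; auto.
  - rewrite IHt1, IHt2 by lia. reflexivity.
Qed.

Lemma occ_shift_lt t k d c : k < c -> occ k (shift d c t) = occ k t.
Proof.
  revert k c; induction t; intros; csimpl; nat_cases;
    rewrite ?IHt, ?IHt1, ?IHt2 by lia; reflexivity.
Qed.

Lemma occ_shift_mid t k d c : c <= k -> k < c + d -> occ k (shift d c t) = 0.
Proof.
  revert k c; induction t; intros; csimpl; nat_cases;
    rewrite ?IHt, ?IHt1, ?IHt2 by lia; reflexivity.
Qed.

Lemma occ_subst_lt t k m u : k < m -> occ k (subst m t u) = occ k t.
Proof.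
  revert k m; induction t; intros; csimpl;
    rewrite ?IHt, ?IHt1, ?IHt2 by lia; try reflexivity.
  nat_cases. apply occ_shift_mid; lia.
Qed.

Lemma occ_subst_ge t k m p w : m <= k -> k < m + p ->
  occ k (subst m t (shift p 0 w)) = occ (S k) t.
Proof.
  revert k m; induction t; intros; csimpl;
    rewrite ?IHt, ?IHt1, ?IHt2 by lia; try reflexivity.
  nat_cases. subst. rewrite shift_shift_merge by lia. apply occ_shift_mid; lia.
Qed.

Lemma dup_occ_split c t s : dup c t s -> occ c s + occ (S c) s = occ c t.
Proof. induction 1; csimpl; nat_cases. Qed.

Lemma dup_occ_lt c t s : dup c t s -> forall k, k < c -> occ k s = occ k t.
Proof.
  induction 1; intros; csimpl; nat_cases;
    rewrite ?IHdup, ?IHdup1, ?IHdup2 by lia; reflexivity.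
Qed.

Lemma dup_occ_gt c t s : dup c t s -> forall k, c < k -> occ (S k) s = occ k t.
Proof.
  induction 1; intros; csimpl; nat_cases;
    rewrite ?IHdup, ?IHdup1, ?IHdup2 by lia; reflexivity.
Qed.

Lemma dup_shift_gap u m k e : e <= k -> k < m + e ->
  dup k (shift m e u) (shift (S m) e u).
Proof.
  revert k e; induction u; intros; csimpl.
  - nat_cases; [constructor; lia|].
    replace (n + S m) with (S (n + m)) by lia. constructor; lia.
  - constructor. apply IHu; lia.
  - constructor; auto.
  - constructor; [apply IHu1; lia | auto].
Qed.

Lemma dup_shift_gap_unique w c d e s : dup c (shift d e w) s -> e <= c -> c < d + e ->
  s = shift (S d) e w.
Proof.
  revert c e s; induction w; intros c e s H H1 H2; simpl in H |- *.
  - destruct (Nat.ltb_spec n e); inversion H; subst; try lia; f_equal; lia.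
  - inversion H; subst. f_equal. apply (IHw (S c)); auto; lia.
  - inversion H; subst. f_equal; eauto.
  - inversion H; subst. f_equal; [apply (IHw1 (S c)) | apply (IHw2 c)]; auto; lia.
Qed.

Lemma dup_subst k t s : dup k t s -> forall m u, k < m ->
  dup k (subst m t u) (subst (S m) s u).
Proof.
  induction 1; intros; csimpl.
  - nat_cases. constructor; lia.
  - nat_cases. apply dup_var_x.
  - nat_cases. apply dup_var_y.
  - nat_cases; [constructor; lia | subst; apply dup_shift_gap; lia |].
    destruct n; [lia|]. simpl. constructor; lia.
  - constructor. apply IHdup; lia.
  - constructor; auto.
  - constructor; auto. apply IHdup1; lia.
Qed.

Lemma dup_shift k t s : dup k t s -> forall d c, k < c ->
  dup k (shift d c t) (shift d (S c) s).
Proof.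
  induction 1; intros; csimpl.
  - nat_cases. constructor; lia.
  - nat_cases. apply dup_var_x.
  - nat_cases. apply dup_var_y.
  - nat_cases. constructor; lia. apply dup_var_gt; lia.
  - constructor. apply IHdup; lia.
  - constructor; auto.
  - constructor; auto. apply IHdup1; lia.
Qed.

Lemma dup_shift_inv a k d c s : dup k (shift d c a) s -> k < c ->
  exists s0, s = shift d (S c) s0 /\ dup k a s0.
Proof.
  revert k c s; induction a; intros k c s H Hk; csimpl in H.
  - destruct (Nat.ltb_spec n c).
    + exists s; split; [|exact H]. inversion H; subst; csimpl; nat_cases.
    + inversion H; subst; try lia.
      exists (Var (S n)). csimpl. nat_cases. split; [f_equal; lia | apply dup_var_gt; lia].
  - inversion H; subst. destruct (IHa _ _ _ H2 ltac:(lia)) as [z [-> Hz]].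
    exists (Lam z). split; auto. constructor; auto.
  - inversion H; subst.
    destruct (IHa1 _ _ _ H3 ltac:(lia)) as [z1 [-> Hz1]].
    destruct (IHa2 _ _ _ H5 ltac:(lia)) as [z2 [-> Hz2]].
    exists (App z1 z2). split; auto. constructor; auto.
  - inversion H; subst.
    destruct (IHa1 _ _ _ H3 ltac:(lia)) as [z1 [-> Hz1]].
    destruct (IHa2 _ _ _ H5 ltac:(lia)) as [z2 [-> Hz2]].
    exists (Sub z1 z2). split; auto. constructor; auto.
Qed.

Lemma dup_subst_merge c t s : dup c t s -> forall u,
  subst c (subst c s (shift 1 0 u)) u = subst c t u.
Proof.
  induction 1; intros; csimpl; try (f_equal; auto; fail).
  - nat_cases.
  - nat_cases. rewrite shift_shift_merge, Nat.add_1_r, subst_shift_cancel by lia.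
    reflexivity.
  - nat_cases.
  - nat_cases; f_equal; lia.
Qed.

(** * Lists of jumps [t L] *)

Lemma apply_L_cons h x L : apply_L h (x :: L) = apply_L (Sub h x) L.
Proof. reflexivity. Qed.

Lemma apply_L_app h L1 L2 : apply_L h (L1 ++ L2) = apply_L (apply_L h L1) L2.
Proof. apply fold_left_app. Qed.

Lemma apply_L_shape L h : L = [] \/ exists a b, apply_L h L = Sub a b.
Proof.
  revert h; induction L as [|x L IH]; intros h; [left; auto | right].
  rewrite apply_L_cons. destruct (IH (Sub h x)) as [->|H]; [exists h, x|]; auto.
Qed.

Lemma apply_L_Lam_inv L t s : apply_L (Lam t) L = Lam s -> L = [] /\ t = s.
Proof.
  intros H. destruct (apply_L_shape L (Lam t)) as [->|[a [b Hab]]].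
  - inversion H; auto.
  - congruence.
Qed.

Lemma apply_L_Lam_not_App L t a b : apply_L (Lam t) L <> App a b.
Proof. destruct (apply_L_shape L (Lam t)) as [->|[x [y ->]]]; discriminate. Qed.

Lemma apply_L_Lam_decomp L2 t s L : apply_L t L2 = apply_L (Lam s) L ->
  exists L1, t = apply_L (Lam s) L1 /\ L = L1 ++ L2.
Proof.
  revert t L; induction L2 as [|x L2 IH] using rev_ind; intros t L H.
  - exists L. rewrite app_nil_r. auto.
  - rewrite apply_L_app in H. destruct L as [|y L _] using rev_ind.
    + discriminate.
    + rewrite apply_L_app in H. simpl in H. inversion H; subst.
      destruct (IH _ _ H1) as [L1 [-> ->]]. exists L1. rewrite app_assoc. auto.
Qed.

(* Shifting and substituting inside a list of jumps: the i-th jump from the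
   outside lives under i more binders. *)
Fixpoint shiftL (d c : nat) (L : list term) : list term :=
  match L with
  | [] => []
  | x :: L => shift d (c + length L) x :: shiftL d c L
  end.

Fixpoint substL (c : nat) (L : list term) (u : term) : list term :=
  match L with
  | [] => []
  | x :: L => subst (c + length L) x u :: substL c L u
  end.

Lemma shiftL_length d c L : length (shiftL d c L) = length L.
Proof. induction L; simpl; auto. Qed.

Lemma substL_length c L u : length (substL c L u) = length L.
Proof. induction L; simpl; auto. Qed.

Lemma shift_apply_L L h d c :
  shift d c (apply_L h L) = apply_L (shift d (c + length L) h) (shiftL d c L).
Proof.
  revert h; induction L; intros; cbn [length shiftL].
  - rewrite Nat.add_0_r. reflexivity.
  - rewrite !apply_L_cons, IHL. cbn [shift]. rewrite Nat.add_succ_r. reflexivity.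
Qed.

Lemma subst_apply_L L h c u :
  subst c (apply_L h L) u = apply_L (subst (c + length L) h u) (substL c L u).
Proof.
  revert h; induction L; intros; cbn [length substL].
  - rewrite Nat.add_0_r. reflexivity.
  - rewrite !apply_L_cons, IHL. cbn [subst]. rewrite Nat.add_succ_r. reflexivity.
Qed.

Lemma shift_apply_L_inv L h d c a : apply_L h L = shift d c a ->
  exists h0 L0, a = apply_L h0 L0 /\ h = shift d (c + length L0) h0 /\
    L = shiftL d c L0 /\ length L0 = length L.
Proof.
  revert h; induction L as [|x L IHL]; intros h H.
  - exists a, []. simpl. rewrite Nat.add_0_r. auto.
  - rewrite apply_L_cons in H. destruct (IHL _ H) as [h1 [L1 [Ha [Hh [HL Hlen]]]]].
    destruct h1; simpl in Hh; try (destruct (_ <? _)); try discriminate.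
    inversion Hh; subst. exists h1_1, (h1_2 :: L1). simpl.
    rewrite Nat.add_succ_r, <- Hlen. auto.
Qed.

Lemma step_shift t t' : lj_step t t' -> forall d c, lj_step (shift d c t) (shift d c t').
Proof.
  induction 1; intros; simpl.
  - rewrite !shift_apply_L. simpl.
    replace (shift d (c + length L) (shift (length L) 0 u))
      with (shift (length (shiftL d c L)) 0 (shift d c u)); [apply lj_dB|].
    rewrite shiftL_length, shift_shift_comm by lia. reflexivity.
  - rewrite shift_subst_comm, Nat.sub_0_r by lia.
    apply lj_w. rewrite occ_shift_lt by lia. auto.
  - rewrite shift_subst_comm, Nat.sub_0_r by lia.
    apply lj_d. rewrite occ_shift_lt by lia. auto.
  - replace (shift d (S c) (shift 1 0 u)) with (shift 1 0 (shift d c u)).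
    + apply lj_c; rewrite ?occ_shift_lt by lia; auto. apply dup_shift; auto; lia.
    + rewrite <- (shift_shift_comm u d 1 c 0) by lia. f_equal. lia.
  - apply lj_lam; auto.
  - apply lj_appl; auto.
  - apply lj_appr; auto.
  - apply lj_subl; auto.
  - apply lj_subr; auto.
Qed.

Lemma step_subst t t' : lj_step t t' -> forall c u, lj_step (subst c t u) (subst c t' u).
Proof.
  induction 1; intros; simpl.
  - rewrite !subst_apply_L. simpl.
    replace (subst (c + length L) (shift (length L) 0 u) u0)
      with (shift (length (substL c L u0)) 0 (subst c u u0)); [apply lj_dB|].
    rewrite substL_length, subst_shift_comm by lia. reflexivity.
  - rewrite subst_subst, Nat.sub_0_r by lia.
    apply lj_w. rewrite occ_subst_lt by lia. auto.
  - rewrite subst_subst, Nat.sub_0_r by lia.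
    apply lj_d. rewrite occ_subst_lt by lia. auto.
  - replace (subst (S c) (shift 1 0 u) u0) with (shift 1 0 (subst c u u0)).
    + apply lj_c; rewrite ?occ_subst_lt by lia; auto. apply dup_subst; auto; lia.
    + rewrite <- (subst_shift_comm u c 1 0) by lia. f_equal. lia.
  - apply lj_lam; auto.
  - apply lj_appl; auto.
  - apply lj_appr; auto.
  - apply lj_subl; auto.
  - apply lj_subr; auto.
Qed.

Lemma step_shift_inv t b : lj_step t b -> forall d c a, t = shift d c a ->
  exists a', b = shift d c a' /\ lj_step a a'.
Proof.
  induction 1; intros d0 c0 a0 Heq;
    destruct a0; csimpl in Heq; try (destruct (_ <? _)); try discriminate;
    inversion Heq; subst.
  - destruct (shift_apply_L_inv _ _ _ _ _ H0) as [h0 [L0 [-> [Hh [-> Hlen]]]]].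
    destruct h0; simpl in Hh; try (destruct (_ <? _)); try discriminate.
    inversion Hh; subst.
    exists (apply_L (Sub h0 (shift (length L0) 0 a0_2)) L0). split; [|apply lj_dB].
    rewrite shift_apply_L. cbn [shift].
    rewrite shiftL_length, shift_shift_comm by lia. reflexivity.
  - exists (subst 0 a0_1 a0_2).
    rewrite shift_subst_comm, Nat.sub_0_r by lia. split; auto.
    apply lj_w. rewrite occ_shift_lt in H by lia. auto.
  - exists (subst 0 a0_1 a0_2).
    rewrite shift_subst_comm, Nat.sub_0_r by lia. split; auto.
    apply lj_d. rewrite occ_shift_lt in H by lia. auto.
  - destruct (dup_shift_inv _ _ _ _ _ H0 ltac:(lia)) as [s0 [-> Hd]].
    exists (Sub (Sub s0 (shift 1 0 a0_2)) a0_2). split.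
    + cbn [shift]. do 2 f_equal.
      rewrite <- (shift_shift_comm a0_2 d0 1 c0 0) by lia. f_equal. lia.
    + rewrite occ_shift_lt in H, H1, H2 by lia. apply lj_c; auto.
  - destruct (IHlj_step _ _ _ eq_refl) as [a' [-> Ha']].
    exists (Lam a'). split; auto. apply lj_lam; auto.
  - destruct (IHlj_step _ _ _ eq_refl) as [a' [-> Ha']].
    exists (App a' a0_2). split; auto. apply lj_appl; auto.
  - destruct (IHlj_step _ _ _ eq_refl) as [a' [-> Ha']].
    exists (App a0_1 a'). split; auto. apply lj_appr; auto.
  - destruct (IHlj_step _ _ _ eq_refl) as [a' [-> Ha']].
    exists (Sub a' a0_2). split; auto. apply lj_subl; auto.
  - destruct (IHlj_step _ _ _ eq_refl) as [a' [-> Ha']].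
    exists (Sub a0_1 a'). split; auto. apply lj_subr; auto.
Qed.

Definition SNj : term -> Prop := Acc (fun a b => lj_step b a).

Inductive star : term -> term -> Prop :=
| star_refl a : star a a
| star_step a b c : lj_step a b -> star b c -> star a c.

Definition plus (a b : term) : Prop := exists c, lj_step a c /\ star c b.

(* [SNp] is accessibility for [plus]; it coincides with [SNj] and lets a
   simulation answer one step by several. *)
Definition SNp : term -> Prop := Acc (fun a b => plus b a).

Lemma star_trans a b c : star a b -> star b c -> star a c.
Proof. induction 1; intros; auto. econstructor; eauto. Qed.

Lemma star_split a b : star a b -> a = b \/ plus a b.
Proof. inversion 1; subst; [left | right; eexists]; eauto. Qed.

Lemma plus_one a b : lj_step a b -> plus a b.
Proof. exists b; split; auto; constructor. Qed.

Lemma SNj_SNp t : SNj t -> SNp t.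
Proof.
  induction 1 as [t _ IH]. constructor. intros y [c [Hc Hs]].
  destruct (star_split _ _ Hs) as [<-|Hp]; [apply IH, Hc|].
  apply (Acc_inv (IH c Hc)), Hp.
Qed.

Lemma SNp_SNj t : SNp t -> SNj t.
Proof. induction 1 as [t _ IH]. constructor. intros y Hy. apply IH, plus_one, Hy. Qed.

Lemma SNj_step a b : SNj a -> lj_step a b -> SNj b.
Proof. intros Ha H. apply (Acc_inv Ha), H. Qed.

Lemma star_map (f : term -> term) :
  (forall a b, lj_step a b -> lj_step (f a) (f b)) ->
  forall a b, star a b -> star (f a) (f b).
Proof. intros Hf a b H; induction H; econstructor; eauto. Qed.

(* Reducing the substituted term [u] in [t{c/u}] takes one step per copy. *)
Lemma star_subst_arg t c u u' : lj_step u u' -> star (subst c t u) (subst c t u').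
Proof.
  revert c; induction t; intros; csimpl.
  - destruct (n <? c); [constructor|]. destruct (n =? c); [|constructor].
    econstructor; [apply step_shift, H | constructor].
  - apply (star_map Lam); auto. intros; apply lj_lam; auto.
  - eapply star_trans.
    + apply (star_map (fun x => App x _)); eauto. intros; apply lj_appl; auto.
    + apply (star_map (App _)); eauto. intros; apply lj_appr; auto.
  - eapply star_trans.
    + apply (star_map (fun x => Sub x _)); eauto. intros; apply lj_subl; auto.
    + apply (star_map (Sub _)); eauto. intros; apply lj_subr; auto.
Qed.

Lemma SNj_lam s : SNj s -> SNj (Lam s).
Proof.
  induction 1 as [s _ IH]. constructor. intros y Hy. inversion Hy; subst. apply IH; auto.
Qed.

(** * Applicative spines [h v1 ... vn] and neutral terms *)

Definition apps (h : term) (vs : list term) : term := fold_left App vs h.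

Lemma apps_cons h v vs : apps h (v :: vs) = apps (App h v) vs.
Proof. reflexivity. Qed.

Lemma apps_app h vs1 vs2 : apps h (vs1 ++ vs2) = apps (apps h vs1) vs2.
Proof. apply fold_left_app. Qed.

Lemma step_apps_head vs h h' : lj_step h h' -> lj_step (apps h vs) (apps h' vs).
Proof. revert h h'; induction vs; intros; auto. apply IHvs, lj_appl; auto. Qed.

Lemma star_apps_head vs h h' : star h h' -> star (apps h vs) (apps h' vs).
Proof. apply (star_map (fun x => apps x vs)). intros; apply step_apps_head; auto. Qed.

Lemma plus_apps_head vs h h' : plus h h' -> plus (apps h vs) (apps h' vs).
Proof.
  intros [c [Hc Hs]]. exists (apps c vs). split; [apply step_apps_head | apply star_apps_head]; auto.
Qed.

Lemma step_apps_arg vs1 vs2 h v v' : lj_step v v' ->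
  lj_step (apps h (vs1 ++ v :: vs2)) (apps h (vs1 ++ v' :: vs2)).
Proof. intros. rewrite !apps_app, !apps_cons. apply step_apps_head, lj_appr; auto. Qed.

Lemma step_apps_inv vs h b : lj_step (apps h vs) b ->
  (exists h', lj_step h h' /\ b = apps h' vs) \/
  (exists vs1 v v' vs2, vs = vs1 ++ v :: vs2 /\ lj_step v v' /\
     b = apps h (vs1 ++ v' :: vs2)) \/
  (exists v vs2 t L, vs = v :: vs2 /\ h = apply_L (Lam t) L /\
     b = apps (apply_L (Sub t (shift (length L) 0 v)) L) vs2).
Proof.
  revert h b; induction vs as [|v vs IH]; intros h b H.
  - left. exists b. auto.
  - rewrite apps_cons in H.
    destruct (IH _ _ H) as [[h' [Hh ->]] | [[vs1 [x [x' [vs2 [-> [Hx ->]]]]]] |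
                            [x [vs2 [t [L [-> [Heq ->]]]]]]]].
    + inversion Hh; subst.
      * right; right. exists v, vs, t, L. auto.
      * left. exists t'. auto.
      * right; left. exists [], v, u', vs. auto.
    + right; left. exists (v :: vs1), x, x', vs2. auto.
    + exfalso. symmetry in Heq. eapply apply_L_Lam_not_App; eauto.
Qed.

(* Neutral terms: a variable applied to arguments.  They never create a
   redex when applied. *)
Inductive neutral : term -> Prop :=
| neutral_var n : neutral (Var n)
| neutral_app a b : neutral a -> neutral (App a b).

Lemma neutral_not_apply_L L t : ~ neutral (apply_L (Lam t) L).
Proof.
  intros H. destruct (apply_L_shape L (Lam t)) as [->|[x [y Hxy]]].
  - inversion H.
  - rewrite Hxy in H. inversion H.
Qed.

Lemma neutral_step a b : lj_step a b -> neutral a -> neutral b.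
Proof.
  induction 1; intros Ha; inversion Ha; subst; try constructor; auto.
  exfalso; eapply neutral_not_apply_L; eauto.
Qed.

(* Applying a neutral SN term to an SN term gives an SN term: no step can
   involve both sides. *)
Lemma SNj_app_neutral a : SNj a -> neutral a -> forall u, SNj u -> SNj (App a u).
Proof.
  induction 1 as [a Ha IHa]. intros Hn u Hu. induction Hu as [u Hu IHu].
  constructor. intros y Hy. inversion Hy; subst.
  - exfalso; eapply neutral_not_apply_L; eauto.
  - apply IHa; auto. eapply neutral_step; eauto. constructor; auto.
  - apply IHu; auto.
Qed.

Lemma SNj_apps_var n vs : Forall SNj vs -> SNj (apps (Var n) vs).
Proof.
  assert (Hgen : forall h, neutral h -> SNj h -> Forall SNj vs -> SNj (apps h vs)).
  { induction vs as [|v vs IH]; intros h Hn Hh Hvs; auto. inversion Hvs; subst.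
    apply IH; [constructor; auto | apply SNj_app_neutral; auto | auto]. }
  intros Hvs. apply Hgen; [constructor | | auto].
  constructor. intros y Hy. inversion Hy.
Qed.

(** * Terms under several jumps *)

(* Arguments [w1; ...; wk], all living in the outer context, are placed as
   the jumps of [t[x1/w1]...[xk/wk]]: each one is lifted over the jumps
   outside it (plus [n] further binders). *)
Fixpoint lift_jumps (n : nat) (ws : list term) : list term :=
  match ws with
  | [] => []
  | w :: ws => shift (n + length ws) 0 w :: lift_jumps n ws
  end.

(* The same arguments substituted at the meta level, innermost first. *)
Fixpoint subst_all (n : nat) (t : term) (ws : list term) : term :=
  match ws with
  | [] => t
  | w :: ws => subst_all n (subst 0 t (shift (n + length ws) 0 w)) ws
  end.

(* [jumps t ws] is [t[x1/w1]...[xk/wk]] and [unjump t ws] is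
   [t{x1/w1}...{xk/wk}], its full unfolding. *)
Definition jumps (t : term) (ws : list term) : term := apply_L t (lift_jumps 0 ws).
Definition unjump (t : term) (ws : list term) : term := subst_all 0 t ws.

Lemma lift_jumps_length n ws : length (lift_jumps n ws) = length ws.
Proof. induction ws; simpl; auto. Qed.

Lemma lift_jumps_app n ws1 ws2 :
  lift_jumps n (ws1 ++ ws2) = lift_jumps (n + length ws2) ws1 ++ lift_jumps n ws2.
Proof.
  induction ws1; simpl; auto. rewrite IHws1, length_app. do 2 f_equal. lia.
Qed.

Lemma jumps_app t ws1 ws2 :
  jumps t (ws1 ++ ws2) = apply_L (apply_L t (lift_jumps (length ws2) ws1)) (lift_jumps 0 ws2).
Proof. unfold jumps. rewrite lift_jumps_app, apply_L_app. reflexivity. Qed.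

Lemma subst_all_app n ws1 ws2 t :
  subst_all n t (ws1 ++ ws2) = subst_all n (subst_all (n + length ws2) t ws1) ws2.
Proof.
  revert t; induction ws1; intros; simpl; auto. rewrite IHws1, length_app. do 4 f_equal. lia.
Qed.

Lemma subst_all_subst0 ws t m u :
  subst 0 (subst_all (S m) t ws) u = subst_all m (subst (length ws) t u) ws.
Proof.
  revert t; induction ws as [|w ws IH]; intros; simpl; auto.
  rewrite IH, subst_subst, Nat.sub_0_r, subst_shift_cancel by lia. reflexivity.
Qed.

Lemma unjump_pull ws1 w ws2 t :
  unjump t (ws1 ++ w :: ws2) =
  unjump (subst (length ws1) t (shift (length ws2) 0 w)) (ws1 ++ ws2).
Proof. unfold unjump. rewrite !subst_all_app. simpl. rewrite subst_all_subst0. reflexivity. Qed.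

Lemma subst_all_step ws n t t' : lj_step t t' -> lj_step (subst_all n t ws) (subst_all n t' ws).
Proof. revert t t'; induction ws; intros; simpl; auto. apply IHws, step_subst; auto. Qed.

Lemma subst_all_star ws n t t' : star t t' -> star (subst_all n t ws) (subst_all n t' ws).
Proof. apply (star_map (fun x => subst_all n x ws)). intros; apply subst_all_step; auto. Qed.

Lemma lift_jumps_split ws n L1 x L2 : lift_jumps n ws = L1 ++ x :: L2 ->
  exists ws1 w ws2, ws = ws1 ++ w :: ws2 /\ L1 = lift_jumps (n + S (length ws2)) ws1 /\
    x = shift (n + length ws2) 0 w /\ L2 = lift_jumps n ws2.
Proof.
  revert L1; induction ws as [|w ws IH]; intros L1 H.
  - destruct L1; discriminate.
  - simpl in H. destruct L1 as [|y L1]; inversion H; subst.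
    + exists [], w, ws. auto.
    + destruct (IH _ H2) as [ws1 [w' [ws2 [-> [-> [-> ->]]]]]].
      exists (w :: ws1), w', ws2. cbn [lift_jumps length].
      rewrite length_app. cbn [length]. repeat split. do 2 f_equal. lia.
Qed.

Lemma occ_apply_lift_jumps ws t c m : c <= m ->
  occ c (apply_L t (lift_jumps (S m) ws)) = occ (c + length ws) t.
Proof.
  revert t; induction ws as [|w ws IH]; intros; cbn [lift_jumps length].
  - f_equal. lia.
  - rewrite apply_L_cons, IH by auto. cbn [occ].
    rewrite occ_shift_mid by lia. rewrite Nat.add_0_r, Nat.add_succ_r. reflexivity.
Qed.

Lemma subst_apply_lift_jumps ws t c m u : c <= m ->
  subst c (apply_L t (lift_jumps (S m) ws)) u =
  apply_L (subst (c + length ws) t u) (lift_jumps m ws).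
Proof.
  revert t; induction ws as [|w ws IH]; intros; cbn [lift_jumps length].
  - rewrite Nat.add_0_r. reflexivity.
  - rewrite !apply_L_cons, IH by auto. cbn [subst].
    change (S m + length ws) with (S (m + length ws)).
    rewrite subst_shift_cancel, Nat.add_succ_r by lia. reflexivity.
Qed.

Lemma dup_apply_lift_jumps ws t c m s : c <= m ->
  dup c (apply_L t (lift_jumps (S m) ws)) s ->
  exists t', s = apply_L t' (lift_jumps (S (S m)) ws) /\ dup (c + length ws) t t'.
Proof.
  revert t s; induction ws as [|w ws IH]; intros t s Hc H; cbn [lift_jumps length] in *.
  - exists s. rewrite Nat.add_0_r. auto.
  - rewrite apply_L_cons in H. destruct (IH _ _ Hc H) as [t'' [-> Hd]].
    inversion Hd; subst.
    apply dup_shift_gap_unique in H5; try lia. subst.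
    exists s1. rewrite apply_L_cons. split; auto.
    replace (c + S (length ws)) with (S (c + length ws)) by lia. auto.
Qed.

(* A jump binding [n] occurrences weighs [2n-1] (and [1] if [n = 0]): rules
   w and d remove a jump, and rule c replaces a weight [2n-1] by
   [(2a-1) + (2b-1)] with [a + b = n], [a, b >= 1]. *)
Definition occ_weight (n : nat) : nat := S (2 * n - 2).

Fixpoint jump_measure (c : nat) (t : term) (ws : list term) : nat :=
  match ws with
  | [] => 0
  | _ :: ws => occ_weight (occ c t) + jump_measure (S c) t ws
  end.

Lemma jump_measure_app ws1 ws2 c t :
  jump_measure c t (ws1 ++ ws2) = jump_measure c t ws1 + jump_measure (c + length ws1) t ws2.
Proof.
  revert c; induction ws1; intros; simpl; [f_equal; lia|].
  rewrite IHws1. replace (S c + length ws1) with (c + S (length ws1)) by lia. lia.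
Qed.

Lemma jump_measure_ext ws c c' t t' :
  (forall i, i < length ws -> occ (c + i) t = occ (c' + i) t') ->
  jump_measure c t ws = jump_measure c' t' ws.
Proof.
  revert c c'; induction ws; intros c c' H; cbn [jump_measure]; auto. f_equal.
  - specialize (H 0). rewrite !Nat.add_0_r in H. rewrite H; [reflexivity | simpl; lia].
  - apply IHws. intros i Hi.
    replace (S c + i) with (c + S i) by lia. replace (S c' + i) with (c' + S i) by lia.
    apply H. simpl. lia.
Qed.

Lemma jump_measure_length ws ws' c t :
  length ws = length ws' -> jump_measure c t ws = jump_measure c t ws'.
Proof.
  revert ws' c; induction ws; destruct ws'; intros; simpl in *; try discriminate; auto.
Qed.

Definition list_step (ws ws' : list term) : Prop :=
  exists ws1 w w' ws2, ws = ws1 ++ w :: ws2 /\ ws' = ws1 ++ w' :: ws2 /\ lj_step w w'.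

Definition SN_list : list term -> Prop := Acc (fun a b => list_step b a).

Lemma SN_list_cons w : SNj w -> forall ws, SN_list ws -> SN_list (w :: ws).
Proof.
  induction 1 as [w _ IHw]. intros ws Hws. induction Hws as [ws Hws IHws].
  constructor. intros y [ws1 [x [x' [ws2 [Heq [-> Hx]]]]]].
  destruct ws1 as [|z ws1]; simpl in Heq; inversion Heq; subst.
  - apply IHw; auto. constructor; auto.
  - apply IHws. exists ws1, x, x', ws2. auto.
Qed.

Lemma Forall_SN_list ws : Forall SNj ws -> SN_list ws.
Proof.
  induction 1; [|apply SN_list_cons; auto].
  constructor. intros y [ws1 [x [x' [ws2 [Heq _]]]]]. destruct ws1; discriminate.
Qed.

(** * Simulating a step of [t[x1/w1]...[xk/wk]] on its unfolding *)

Inductive jump_root : term -> term -> Prop :=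
| jump_root_w t u : occ 0 t = 0 -> jump_root (Sub t u) (subst 0 t u)
| jump_root_d t u : occ 0 t = 1 -> jump_root (Sub t u) (subst 0 t u)
| jump_root_c t s u : 2 <= occ 0 t -> dup 0 t s -> 1 <= occ 0 s -> 1 <= occ 1 s ->
    jump_root (Sub t u) (Sub (Sub s (shift 1 0 u)) u).

Lemma step_apply_L_inv L t b : lj_step (apply_L t L) b ->
  (exists t', lj_step t t' /\ b = apply_L t' L) \/
  (exists L1 x x' L2, L = L1 ++ x :: L2 /\ lj_step x x' /\ b = apply_L t (L1 ++ x' :: L2)) \/
  (exists L1 x L2 r, L = L1 ++ x :: L2 /\ jump_root (Sub (apply_L t L1) x) r /\
     b = apply_L r L2).
Proof.
  revert t b; induction L as [|x L IH]; intros t b H.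
  - left. exists b. auto.
  - rewrite apply_L_cons in H.
    destruct (IH _ _ H) as [[t'' [Ht ->]] | [[L1 [y [y' [L2 [-> [Hy ->]]]]]] |
                            [L1 [y [L2 [r [-> [Hr ->]]]]]]]].
    + inversion Ht; subst.
      * right; right. exists [], x, L, (subst 0 t x). repeat split; auto. apply jump_root_w; auto.
      * right; right. exists [], x, L, (subst 0 t x). repeat split; auto. apply jump_root_d; auto.
      * right; right. exists [], x, L, (Sub (Sub s (shift 1 0 x)) x).
        repeat split; auto. apply jump_root_c; eauto.
      * left. exists t'. auto.
      * right; left. exists [], x, u', L. auto.
    + right; left. exists (x :: L1), y, y', L2. auto.
    + right; right. exists (x :: L1), y, L2, r. auto.
Qed.

Lemma jumps_step_inv t ws h : lj_step (jumps t ws) h ->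
  (exists t', lj_step t t' /\ h = jumps t' ws) \/
  (exists ws1 w w' ws2, ws = ws1 ++ w :: ws2 /\ lj_step w w' /\
     h = jumps t (ws1 ++ w' :: ws2)) \/
  (exists ws1 w ws2 r, ws = ws1 ++ w :: ws2 /\
     jump_root (Sub (apply_L t (lift_jumps (S (length ws2)) ws1)) (shift (length ws2) 0 w)) r /\
     h = apply_L r (lift_jumps 0 ws2)).
Proof.
  intros H.
  destruct (step_apply_L_inv _ _ _ H) as [[t' [Ht ->]] |
    [[L1 [x [x' [L2 [HL [Hx ->]]]]]] | [L1 [x [L2 [r [HL [Hr ->]]]]]]]].
  - left. exists t'. auto.
  - right; left.
    destruct (lift_jumps_split _ _ _ _ _ HL) as [ws1 [w [ws2 [-> [-> [-> ->]]]]]].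
    destruct (step_shift_inv _ _ Hx _ _ w eq_refl) as [w' [-> Hw]].
    exists ws1, w, w', ws2. repeat split; auto.
    unfold jumps. rewrite lift_jumps_app. reflexivity.
  - right; right.
    destruct (lift_jumps_split _ _ _ _ _ HL) as [ws1 [w [ws2 [-> [-> [-> ->]]]]]].
    exists ws1, w, ws2, r. auto.
Qed.

Lemma jumps_erase_sim t ws1 w ws2 :
  apply_L (subst 0 (apply_L t (lift_jumps (S (length ws2)) ws1)) (shift (length ws2) 0 w))
          (lift_jumps 0 ws2)
    = jumps (subst (length ws1) t (shift (length ws2) 0 w)) (ws1 ++ ws2) /\
  unjump (subst (length ws1) t (shift (length ws2) 0 w)) (ws1 ++ ws2)
    = unjump t (ws1 ++ w :: ws2) /\
  jump_measure 0 (subst (length ws1) t (shift (length ws2) 0 w)) (ws1 ++ ws2)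
    < jump_measure 0 t (ws1 ++ w :: ws2).
Proof.
  set (t0 := subst (length ws1) t (shift (length ws2) 0 w)).
  split; [|split].
  - rewrite subst_apply_lift_jumps, jumps_app by lia. reflexivity.
  - rewrite unjump_pull. reflexivity.
  - rewrite !jump_measure_app. cbn [jump_measure].
    rewrite (jump_measure_ext ws1 0 0 t0 t),
            (jump_measure_ext ws2 (0 + length ws1) (S (0 + length ws1)) t0 t).
    + unfold occ_weight. lia.
    + intros i Hi. unfold t0. rewrite occ_subst_ge by lia. reflexivity.
    + intros i Hi. unfold t0. rewrite occ_subst_lt by lia. reflexivity.
Qed.

Lemma jumps_dup_sim t t' ws1 w ws2 :
  dup (length ws1) t t' -> 2 <= occ (length ws1) t ->
  1 <= occ (length ws1) t' -> 1 <= occ (S (length ws1)) t' ->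
  apply_L (Sub (Sub (apply_L t' (lift_jumps (S (S (length ws2))) ws1))
                    (shift 1 0 (shift (length ws2) 0 w)))
               (shift (length ws2) 0 w)) (lift_jumps 0 ws2)
    = jumps t' (ws1 ++ w :: w :: ws2) /\
  unjump t' (ws1 ++ w :: w :: ws2) = unjump t (ws1 ++ w :: ws2) /\
  jump_measure 0 t' (ws1 ++ w :: w :: ws2) < jump_measure 0 t (ws1 ++ w :: ws2).
Proof.
  intros Hd Ht Ht'0 Ht'1. split; [|split].
  - rewrite jumps_app. cbn [lift_jumps length Nat.add].
    rewrite !apply_L_cons, shift_shift_merge by lia. reflexivity.
  - rewrite !unjump_pull. cbn [length].
    rewrite <- (dup_subst_merge _ _ _ Hd), shift_shift_merge by lia. reflexivity.
  - rewrite !jump_measure_app. cbn [jump_measure length].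
    rewrite (jump_measure_ext ws1 0 0 t' t),
            (jump_measure_ext ws2 (S (S (0 + length ws1))) (S (0 + length ws1)) t' t).
    + pose proof (dup_occ_split _ _ _ Hd). cbn [Nat.add] in *. unfold occ_weight. lia.
    + intros i Hi. replace (S (S (0 + length ws1)) + i) with (S (S (length ws1) + i)) by lia.
      rewrite (dup_occ_gt _ _ _ Hd) by lia. f_equal.
    + intros i Hi. rewrite (dup_occ_lt _ _ _ Hd) by lia. reflexivity.
Qed.

Lemma jumps_root_sim t ws1 w ws2 r :
  jump_root (Sub (apply_L t (lift_jumps (S (length ws2)) ws1)) (shift (length ws2) 0 w)) r ->
  exists t' ws', apply_L r (lift_jumps 0 ws2) = jumps t' ws' /\
    incl ws' (ws1 ++ w :: ws2) /\
    unjump t' ws' = unjump t (ws1 ++ w :: ws2) /\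
    jump_measure 0 t' ws' < jump_measure 0 t (ws1 ++ w :: ws2).
Proof.
  assert (Hincl : incl (ws1 ++ ws2) (ws1 ++ w :: ws2)).
  { intros v. rewrite !in_app_iff. simpl. tauto. }
  inversion 1 as [? ? _ | ? ? _ | ? s ? Hocc Hdup Hs0 Hs1]; subst.
  1-2: exists (subst (length ws1) t (shift (length ws2) 0 w)), (ws1 ++ ws2);
       destruct (jumps_erase_sim t ws1 w ws2) as [-> [-> Hlt]]; auto.
  - destruct (dup_apply_lift_jumps ws1 t 0 (length ws2) s ltac:(lia) Hdup) as [t' [-> Hd]].
    rewrite !occ_apply_lift_jumps in Hocc, Hs0, Hs1 by lia. simpl in Hocc, Hs0, Hs1.
    exists t', (ws1 ++ w :: w :: ws2).
    destruct (jumps_dup_sim t t' ws1 w ws2) as [-> [-> Hlt]]; auto.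
    repeat split; auto. intros v. rewrite !in_app_iff. simpl. tauto.
Qed.

Lemma jumps_step_sim t ws h : Forall SNj ws -> lj_step (jumps t ws) h ->
  exists t' ws', h = jumps t' ws' /\ Forall SNj ws' /\
    (plus (unjump t ws) (unjump t' ws') \/
     (unjump t' ws' = unjump t ws /\ jump_measure 0 t' ws' < jump_measure 0 t ws) \/
     (unjump t' ws' = unjump t ws /\ jump_measure 0 t' ws' = jump_measure 0 t ws /\
      list_step ws ws')).
Proof.
  intros Hws H.
  destruct (jumps_step_inv _ _ _ H) as [[t' [Ht ->]] | [[ws1 [w [w' [ws2 [-> [Hw ->]]]]]] |
                                         [ws1 [w [ws2 [r [-> [Hr ->]]]]]]]].
  - exists t', ws. repeat split; auto. left. apply plus_one, subst_all_step, Ht.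
  - exists t, (ws1 ++ w' :: ws2). split; [reflexivity|split].
    + apply Forall_app in Hws as [Hws1 Hws2]. inversion Hws2; subst.
      apply Forall_app. split; auto. constructor; auto. eapply SNj_step; eauto.
    + assert (Hstar : star (unjump t (ws1 ++ w :: ws2)) (unjump t (ws1 ++ w' :: ws2))).
      { rewrite !unjump_pull. apply subst_all_star, star_subst_arg, step_shift, Hw. }
      destruct (star_split _ _ Hstar) as [Heq | Hp]; [right; right | left]; auto.
      repeat split; auto.
      * apply jump_measure_length. rewrite !length_app. reflexivity.
      * exists ws1, w, w', ws2. auto.
  - destruct (jumps_root_sim _ _ _ _ _ Hr) as [t' [ws' [-> [Hincl [Heq Hlt]]]]].
    exists t', ws'. repeat split; auto.
    apply Forall_forall. intros v Hv. eapply Forall_forall; eauto.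
Qed.

Lemma subst_all_dB ws s L : exists s' L', length L' = length L /\
  subst_all 0 (apply_L (Lam s) L) ws = apply_L (Lam s') L' /\
  forall v, subst_all 0 (apply_L (Sub s (shift (length L + length ws) 0 v)) L) ws =
            apply_L (Sub s' (shift (length L) 0 v)) L'.
Proof.
  revert s L; induction ws as [|w ws IH]; intros.
  - exists s, L. simpl. rewrite Nat.add_0_r. auto.
  - simpl. rewrite !subst_apply_L. simpl.
    destruct (IH (subst (S (length L)) s (shift (length ws) 0 w))
                 (substL 0 L (shift (length ws) 0 w))) as [s' [L' [Hlen [H1 H2]]]].
    rewrite substL_length in Hlen, H2.
    exists s', L'. repeat split; auto. intros v. rewrite subst_apply_L. cbn [subst].
    rewrite <- H2, Nat.add_succ_r, subst_shift_cancel by lia. reflexivity.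
Qed.

Lemma jumps_dB_sim t ws s L v : jumps t ws = apply_L (Lam s) L ->
  exists t', apply_L (Sub s (shift (length L) 0 v)) L = jumps t' ws /\
    lj_step (App (unjump t ws) v) (unjump t' ws).
Proof.
  unfold jumps. intros Heq. destruct (apply_L_Lam_decomp _ _ _ _ Heq) as [L1 [-> ->]].
  destruct (subst_all_dB ws s L1) as [s' [L' [Hlen [H1 H2]]]].
  exists (apply_L (Sub s (shift (length L1 + length ws) 0 v)) L1). split.
  - rewrite length_app, lift_jumps_length, apply_L_app. reflexivity.
  - unfold unjump. rewrite H1, H2, <- Hlen. apply lj_dB.
Qed.

(** * The IE property: jumps with SN arguments preserve SN *)

Lemma SNj_jumps_gen N : SNp N -> forall m ws, SN_list ws -> forall t vs,
  Forall SNj ws -> apps (unjump t ws) vs = N -> jump_measure 0 t ws = m ->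
  SNj (apps (jumps t ws) vs).
Proof.
  induction 1 as [N _ IHN].
  intros m. induction m as [m IHm] using (well_founded_induction lt_wf).
  intros ws Hacc. induction Hacc as [ws _ IHws].
  intros t vs Hws HN Hm. subst N m. constructor. intros b Hb.
  destruct (step_apps_inv _ _ _ Hb) as [[h [Hh ->]] | [[vs1 [v [v' [vs2 [-> [Hv ->]]]]]] |
                                        [v [vs2 [s [L [-> [Heq ->]]]]]]]].
  - destruct (jumps_step_sim _ _ _ Hws Hh)
      as [t' [ws' [-> [Hws' [Hp | [[Heq Hlt] | [Heq [Hm Hl]]]]]]]].
    + eapply IHN; eauto using Forall_SN_list. apply plus_apps_head, Hp.
    + eapply IHm; eauto using Forall_SN_list. rewrite Heq. reflexivity.
    + eapply IHws; eauto. rewrite Heq. reflexivity.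
  - eapply IHN; eauto using Forall_SN_list. apply plus_one, step_apps_arg, Hv.
  - destruct (jumps_dB_sim t ws s L v Heq) as [t' [-> Hstep]].
    eapply IHN; eauto using Forall_SN_list.
    apply plus_one. rewrite apps_cons. apply step_apps_head, Hstep.
Qed.

Corollary SNj_jump s u vs :
  SNj u -> SNj (apps (subst 0 s u) vs) -> SNj (apps (Sub s u) vs).
Proof.
  intros Hu Hsu.
  replace (Sub s u) with (jumps s [u]) by (unfold jumps; simpl; rewrite shift_zero; reflexivity).
  eapply (SNj_jumps_gen _ (SNj_SNp _ Hsu)); eauto using Forall_SN_list.
  unfold unjump. simpl. rewrite shift_zero. reflexivity.
Qed.

(* Induction on
   the SN of [s{x/u} vs] (which simulates every step except the reduction
   of [u] and the dB step itself) and then on the SN of [u]. *)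
Lemma SNj_redex_gen N : SNp N -> forall u, SNj u -> forall s vs,
  apps (subst 0 s u) vs = N -> SNj (apps (App (Lam s) u) vs).
Proof.
  induction 1 as [N HN IHN]. intros u Hu. induction Hu as [u Hu IHu].
  intros s vs Heq. subst N. constructor. intros b Hb.
  destruct (step_apps_inv _ _ _ Hb) as [[h' [Hh ->]] | [[vs1 [v [v' [vs2 [-> [Hv ->]]]]]] |
                                        [v [vs2 [t [L [-> [Heq ->]]]]]]]].
  - inversion Hh; subst.
    + (* the dB step itself: the jump is handled by the IE property *)
      match goal with H : apply_L (Lam _) _ = Lam _ |- _ =>
        destruct (apply_L_Lam_inv _ _ _ H) as [-> ->] end.
      simpl. rewrite shift_zero. apply SNj_jump; [constructor; auto|].
      apply SNp_SNj. constructor; auto.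
    + match goal with H : lj_step (Lam _) _ |- _ => inversion H; subst end.
      eapply IHN; eauto; [|constructor; auto].
      apply plus_one, step_apps_head, step_subst; auto.
    + assert (Hstar : star (apps (subst 0 s u) vs) (apps (subst 0 s u') vs)).
      { apply star_apps_head, star_subst_arg; auto. }
      destruct (star_split _ _ Hstar) as [Heq | Hp].
      * eapply IHu; eauto.
      * eapply IHN; eauto. eapply SNj_step; [constructor; exact Hu | eauto].
  - eapply IHN; eauto; [|constructor; auto].
    apply plus_one, step_apps_arg, Hv.
  - exfalso. symmetry in Heq. eapply apply_L_Lam_not_App; eauto.
Qed.

Corollary SNj_redex s u vs :
  SNj u -> SNj (apps (subst 0 s u) vs) -> SNj (apps (App (Lam s) u) vs).
Proof. intros Hu Hsu. eapply (SNj_redex_gen _ (SNj_SNp _ Hsu)); eauto. Qed.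

(** * From beta-SN to lambda-j-SN *)

Inductive subterm : term -> term -> Prop :=
| subterm_refl a : subterm a a
| subterm_lam a b : subterm a b -> subterm a (Lam b)
| subterm_appl a b c : subterm a b -> subterm a (App b c)
| subterm_appr a b c : subterm a c -> subterm a (App b c).

Lemma subterm_trans a b c : subterm a b -> subterm b c -> subterm a c.
Proof.
  intros Hab Hbc. revert Hab.
  induction Hbc; intros Hab;
    [exact Hab | apply subterm_lam | apply subterm_appl | apply subterm_appr]; auto.
Qed.

Lemma beta_step_subterm a t : subterm a t -> forall a', beta_step a a' ->
  exists t', beta_step t t' /\ subterm a' t'.
Proof.
  induction 1; intros a' Ha.
  - exists a'. split; [auto | constructor].
  - destruct (IHsubterm a' Ha) as [b' [Hb Hs]].
    exists (Lam b'). split; [apply beta_lam | apply subterm_lam]; auto.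
  - destruct (IHsubterm a' Ha) as [b' [Hb Hs]].
    exists (App b' c). split; [apply beta_appl | apply subterm_appl]; auto.
  - destruct (IHsubterm a' Ha) as [c' [Hc Hs]].
    exists (App b c'). split; [apply beta_appr | apply subterm_appr]; auto.
Qed.

Lemma beta_apps_head vs h h' : beta_step h h' -> beta_step (apps h vs) (apps h' vs).
Proof. revert h h'; induction vs; intros; auto. apply IHvs, beta_appl; auto. Qed.

Fixpoint size (t : term) : nat :=
  match t with
  | Var _ => 1
  | Lam t => S (size t)
  | App t u | Sub t u => S (size t + size u)
  end.

Lemma apps_head_subterm vs h : subterm h (apps h vs) /\ size h <= size (apps h vs).
Proof.
  revert h; induction vs as [|v vs IH]; intros h; [split; [constructor | auto]|].
  rewrite apps_cons. destruct (IH (App h v)) as [Hs Hz]. simpl in Hz. split; [|lia].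
  eapply subterm_trans; [|exact Hs]. apply subterm_appl, subterm_refl.
Qed.

Lemma apps_arg_subterm vs h v : In v vs ->
  subterm v (apps h vs) /\ size v < size (apps h vs).
Proof.
  revert h; induction vs as [|w vs IH]; intros h Hv; [contradiction|].
  destruct Hv as [-> | Hv]; [|apply IH, Hv].
  rewrite apps_cons. destruct (apps_head_subterm vs (App h v)) as [Hs Hz].
  simpl in Hz. split; [|lia].
  eapply subterm_trans; [|exact Hs]. apply subterm_appr, subterm_refl.
Qed.

Lemma spine a : exists h vs, a = apps h vs /\ forall x y, h <> App x y.
Proof.
  induction a as [n | a _ | a1 IH1 a2 _ | a1 _ a2 _].
  - exists (Var n), []. split; [auto | discriminate].
  - exists (Lam a), []. split; [auto | discriminate].
  - destruct IH1 as [h [vs [-> Hh]]]. exists h, (vs ++ [a2]).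
    rewrite apps_app. auto.
  - exists (Sub a1 a2), []. split; [auto | discriminate].
Qed.

Lemma is_lambda_apps vs h : is_lambda (apps h vs) <-> is_lambda h /\ Forall is_lambda vs.
Proof.
  revert h; induction vs as [|v vs IH]; intros h.
  - simpl. intuition.
  - rewrite apps_cons, IH, Forall_cons_iff. simpl. tauto.
Qed.

Lemma is_lambda_shift t d c : is_lambda t -> is_lambda (shift d c t).
Proof.
  revert c; induction t; intros c Ht; simpl in *; auto.
  - destruct (n <? c); simpl; auto.
  - destruct Ht; split; auto.
Qed.

Lemma is_lambda_subst t c u : is_lambda t -> is_lambda u -> is_lambda (subst c t u).
Proof.
  revert c; induction t; intros c Ht Hu; csimpl; simpl in Ht; auto.
  - destruct (n <? c); simpl; auto.
    destruct (n =? c); simpl; auto. apply is_lambda_shift; auto.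
  - destruct Ht; split; auto.
Qed.

(* Every lambda-subterm of a beta-SN term is lambda-j-SN: induction on the
   beta-SN of the whole term, then on the size of the subterm, analysing its
   spine: a variable head is neutral, an abstraction head is either alone or
   forms a redex whose contractum is a beta-reduct of the whole term. *)
Lemma SNj_of_beta_SN t : Acc (fun a b => beta_step b a) t ->
  forall a, subterm a t -> is_lambda a -> SNj a.
Proof.
  induction 1 as [t _ IHt]. intros a.
  induction a as [a IHa] using (well_founded_induction (well_founded_ltof _ size)).
  intros Hsub Hl.
  destruct (spine a) as [h [vs [-> Hh]]].
  apply is_lambda_apps in Hl as [Hlh Hlvs].
  assert (Hvs : Forall SNj vs).
  { apply Forall_forall. intros v Hv. destruct (apps_arg_subterm vs h v Hv) as [Hs Hz].
    apply IHa; [exact Hz | eapply subterm_trans; eauto | eapply Forall_forall; eauto]. }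
  destruct h as [n | s | x y | x y].
  - apply SNj_apps_var, Hvs.
  - destruct vs as [|v vs].
    + apply SNj_lam, IHa; [unfold ltof; cbn; lia | | exact Hlh].
      eapply subterm_trans; [|exact Hsub]. apply subterm_lam, subterm_refl.
    + apply Forall_cons_iff in Hvs as [Hv _]. apply Forall_cons_iff in Hlvs as [Hlv Hlvs].
      rewrite apps_cons in Hsub |- *. apply SNj_redex; auto.
      destruct (beta_step_subterm _ _ Hsub (apps (subst 0 s v) vs)) as [t' [Ht' Hs']].
      { apply beta_apps_head, beta_rule. }
      apply (IHt t' Ht'); auto. apply is_lambda_apps. split; auto.
      apply is_lambda_subst; auto.
  - exfalso. eapply Hh; eauto.
  - contradiction.
Qed.

Lemma Acc_SN (R : term -> term -> Prop) t : Acc (fun a b => R b a) t -> SN R t.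
Proof.
  induction 1 as [x _ IH]. intros [f [H0 Hf]].
  apply (IH (f 1)); [rewrite <- H0; apply Hf|].
  exists (fun n => f (S n)). auto.
Qed.

(* Classically, a term that is not accessible has a non-accessible reduct;
   iterating this choice builds an infinite reduction sequence. *)
Lemma SN_Acc (R : term -> term -> Prop) t : SN R t -> Acc (fun a b => R b a) t.
Proof.
  intros Hsn. apply NNPP. intros Hn. apply Hsn.
  pose (P := fun x => ~ Acc (fun a b => R b a) x).
  assert (Hnext : forall x, P x -> exists y, R x y /\ P y).
  { intros x Hx. apply NNPP. intros Hno. apply Hx. constructor. intros y Hy.
    apply NNPP. intros Hy'. apply Hno. exists y. auto. }
  pose (next := fun (s : {x | P x}) =>
    let e := constructive_indefinite_description _ (Hnext _ (proj2_sig s)) in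
    exist P (proj1_sig e) (proj2 (proj2_sig e))).
  exists (fun n => proj1_sig (Nat.iter n next (exist P t Hn))). split; auto.
  intros n. simpl. destruct (Nat.iter n next (exist P t Hn)) as [x Hx]. simpl.
  destruct (constructive_indefinite_description _ (Hnext x Hx)) as [y [Hy Py]]. exact Hy.
Qed.

Theorem corollary20 (t : term) :
  is_lambda t -> SN beta_step t -> SN lj_step t.
Proof.
  intros Hl Hsn. apply Acc_SN.
  exact (SNj_of_beta_SN t (SN_Acc _ _ Hsn) t (subterm_refl t) Hl).
Qed.
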